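(* For every $n\ge0$, the sequence $(W_0,W_1,\dots,W_n)$ of Whitney numbers of the second kind of $\Pi(n)$ is weakly increasing. Moreover, for $n\ge3$ it is strictly increasing.
   Context: $[n]_0=\{0,\dots,n\}$. A priority forest on $[n]_0$ is a rooted forest with vertex set $[n]_0$ whose component trees $T_0,T_1,\dots$ are increasing (each non-root vertex has a larger label than its parent) and satisfy: for $j<k$ every label of $T_j$ is smaller than every label of $T_k$. The priority lattice $\Pi(n)$ consists of the priority forests on $[n]_0$, ordered by inclusion of edge sets, together with an extra top element $\hat1$ of rank $n+1$; the rank of a priority forest is its number of edges. $W_k$ is the number of elements of $\Pi(n)$ of rank $k$. *)

From mathcomp Require Import all_boot.
Set Implicit Arguments. Unset Strict Implicit. Unset Printing Implicit Defensive.

(* A rooted forest on [n]_0 = {0,...,n} (= 'I_n.+1) is encoded by its parent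
   function: par v = Some u iff u is the parent of v (edge u -- v),
   par v = None iff v is a root. *)
Definition forest_fn (n : nat) := {ffun 'I_n.+1 -> option 'I_n.+1}.

Definition increasing_forest n (f : forest_fn n) : bool :=
  [forall v, if f v is Some u then u < v else true].

(* Root of the tree containing v: follow parents (n steps suffice when
   the forest is increasing). *)
Definition step n (f : forest_fn n) (x : 'I_n.+1) : 'I_n.+1 := odflt x (f x).
Definition root n (f : forest_fn n) (v : 'I_n.+1) : 'I_n.+1 := iter n (step f) v.

Definition same_tree n (f : forest_fn n) (x y : 'I_n.+1) : bool := root f x == root f y.

Definition priority_cond n (f : forest_fn n) : bool :=
  [forall u, forall v, ~~ same_tree f u v ==>
     ([forall x, forall y, same_tree f x u && same_tree f y v ==> (x < y)] ||
      [forall x, forall y, same_tree f x u && same_tree f y v ==> (y < x)])].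

Definition priority_forest n (f : forest_fn n) : bool :=
  increasing_forest f && priority_cond f.

Definition nedges n (f : forest_fn n) : nat := #|[set v | f v != None]|.

(* Whitney numbers of the second kind of the priority lattice Pi(n):
   priority forests of rank k, plus the extra top element (rank n+1). *)
Definition W (n k : nat) : nat :=
  (k == n.+1) + #|[set f : forest_fn n | priority_forest f && (nedges f == k)]|.

(* For an increasing forest, the priority condition says exactly that no root v
   is straddled by an edge u -- w with u < v < w (roots then cut [n]_0 into the
   consecutive intervals occupied by the trees).  Grafting the least nonzero root
   r, the root of T_1, onto 0 merges T_0 and T_1: it keeps roots unstraddled, since
   no root lies strictly between 0 and r, and adds one edge.  It is injective,
   because r is the only child of 0 in the result that no edge straddles; so
   W_k <= W_(k+1) for k < n.  Every forest in the image has such a child, while for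
   n >= 3 there is a priority forest of each rank k+1 <= n without one: the star
   hanging 2, ..., k+2 below 1 when k+1 < n, and the broom with 1, 2 below 0 and
   all other vertices below 1 when k+1 = n. *)

From mathcomp Require Import all_boot zify.
Set Implicit Arguments. Unset Strict Implicit. Unset Printing Implicit Defensive.

Lemma card_interval N a b : a <= b <= N -> #|[set v : 'I_N | a <= v < b]| = b - a.
Proof.
case/andP=> ab bN; rewrite -sum1_card.
rewrite (eq_bigl (fun v : 'I_N => a <= v < b)) => [|v]; last by rewrite inE.
rewrite -(big_mkord (fun i => a <= i < b) (fun _ => 1)).
rewrite -(big_nat_widen 0 _ _ (fun i => a <= i)) //.
by rewrite -(big_nat_widenl _ _ _ predT) // sum_nat_const_nat muln1.
Qed.

Section Forests.
Variable n : nat.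
Implicit Types (f g : forest_fn n) (u v w x r : 'I_n.+1).

Definition unstraddled f v : Prop := forall w u, f w = Some u -> u < v -> w <= v.
Definition roots_unstraddled f : Prop := forall v, f v = None -> unstraddled f v.

Lemma parent_lt f v u : increasing_forest f -> f v = Some u -> u < v.
Proof. by move=> /forallP/(_ v); case: (f v) => // a ? [<-]. Qed.

Lemma step_le f x : increasing_forest f -> step f x <= x.
Proof.
by move=> incf; rewrite /step; case e: (f x) => [u|] //=; rewrite ltnW ?(parent_lt incf e).
Qed.

Lemma root_le f x : increasing_forest f -> root f x <= x.
Proof.
move=> incf; suff: forall m, iter m (step f) x <= x by apply.
by elim=> //= m IH; rewrite (leq_trans (step_le _ incf)).
Qed.

Lemma iter_step_root f m x : increasing_forest f ->
  f (iter m (step f) x) = None \/ iter m (step f) x + m <= x.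
Proof.
move=> incf; elim: m => [|m IH]; first by right; rewrite addn0.
rewrite iterS; move: IH; set y := iter m (step f) x.
rewrite /step; case e: (f y) => [u|] /=; last by left.
case=> [fy|IH]; first by rewrite fy in e.
by right; have := parent_lt incf e; lia.
Qed.

Lemma root_is_root f x : increasing_forest f -> f (root f x) = None.
Proof.
move=> incf; case: (iter_step_root n x incf) => // lenx.
have -> : root f x = ord0 by apply/val_inj; rewrite /= /root; have := ltn_ord x; lia.
by move/forallP: incf => /(_ ord0); case: (f ord0).
Qed.

Lemma root_of_root f x : f x = None -> root f x = x.
Proof.
move=> fx; suff: forall m, iter m (step f) x = x by apply.
by elim=> //= m ->; rewrite /step fx.
Qed.

Lemma root_parent f x u : increasing_forest f -> f x = Some u -> root f x = root f u.
Proof.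
move=> incf fx; have: step f x = u by rewrite /step fx.
by move <-; rewrite /root -iterSr iterS -/(root f x) /step root_is_root.
Qed.

Lemma root_ge_unstraddled f r x : increasing_forest f -> unstraddled f r -> f r = None ->
  r <= x -> r <= root f x.
Proof.
move=> incf unstr fr; have [m] := ubnP x; elim: m x => // m IH x xm rx.
case fx: (f x) => [u|]; last by rewrite root_of_root.
rewrite (root_parent incf fx); have ux := parent_lt incf fx.
case: (leqP r u) => [ru|ur]; first by apply: IH => //; lia.
have xr : x = r by apply/val_inj/eqP; rewrite eqn_leq rx (unstr _ _ fx ur).
by rewrite xr fr in fx.
Qed.

Lemma root_lt_mono f x y : increasing_forest f -> roots_unstraddled f ->
  root f x < root f y -> x < y.
Proof.
move=> incf unstr; apply: contraTT; rewrite -!leqNgt => yx.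
have ry := root_is_root y incf.
exact: root_ge_unstraddled (unstr _ ry) ry (leq_trans (root_le y incf) yx).
Qed.

Lemma priority_condP f : increasing_forest f -> reflect (roots_unstraddled f) (priority_cond f).
Proof.
move=> incf; apply: (iffP idP) => [prio v fv w u fw uv | unstr].
  rewrite leqNgt; apply/negP => vw.
  have diff : ~~ same_tree f u v.
    rewrite /same_tree (root_of_root fv) neq_ltn (leq_ltn_trans (root_le u incf)) //.
  have /forallP/(_ u)/forallP/(_ v) := prio; rewrite diff /same_tree.
  case/orP => [/forallP/(_ w)/forallP/(_ v) | /forallP/(_ u)/forallP/(_ v)].
    by rewrite (root_parent incf fw) !eqxx /= ltnNge (ltnW vw).
  by rewrite !eqxx /= ltnNge (ltnW uv).
have below a b x y : root f a < root f b -> same_tree f x a -> same_tree f y b -> x < y.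
  by move=> ab /eqP xa /eqP yb; apply: (root_lt_mono incf unstr); rewrite xa yb.
apply/forallP => u; apply/forallP => v; apply/implyP => diff.
case: (ltngtP (root f u) (root f v)) => [lt|gt|eq]; last first.
- by rewrite /same_tree (val_inj eq) eqxx in diff.
- apply/orP; right; apply/forallP => x; apply/forallP => y.
  by apply/implyP => /andP [xu yv]; apply: below gt _ _.
- apply/orP; left; apply/forallP => x; apply/forallP => y.
  by apply/implyP => /andP [xu yv]; apply: below lt _ _.
Qed.

Definition graft f r : forest_fn n := [ffun v => if v == r then Some ord0 else f v].

Definition least_nonzero_root f r : bool :=
  [&& 0 < r, f r == None & [forall r' : 'I_n.+1, (0 < r') && (f r' == None) ==> (r <= r')]].

Definition merge_first_trees f : forest_fn n :=
  if [pick r | least_nonzero_root f r] is Some r then graft f r else f.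

Definition exposed_child0 g r : Prop := g r = Some ord0 /\ unstraddled g r.

Lemma graft_other f r w : w != r -> graft f r w = f w.
Proof. by rewrite ffunE => /negbTE ->. Qed.

Lemma graft_increasing f r : increasing_forest f -> 0 < r -> increasing_forest (graft f r).
Proof.
move=> incf r_gt0; apply/forallP => v; rewrite ffunE.
by case: eqP => [->|_]; last exact: (forallP incf v).
Qed.

Lemma nedges_graft f r : f r = None -> nedges (graft f r) = (nedges f).+1.
Proof.
move=> fr; rewrite /nedges.
have -> : [set v | graft f r v != None] = r |: [set v | f v != None].
  by apply/setP => v; rewrite !inE ffunE; case: (v == r).
by rewrite cardsU1 inE fr.
Qed.

Lemma exposed_graft f r : roots_unstraddled f -> f r = None -> exposed_child0 (graft f r) r.
Proof.
move=> unstr fr; split=> [|w u]; first by rewrite ffunE eqxx.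
by case: (eqVneq w r) => [-> //|wr]; rewrite graft_other //; apply: unstr.
Qed.

Lemma graft_roots_unstraddled f r : roots_unstraddled f -> least_nonzero_root f r ->
  roots_unstraddled (graft f r).
Proof.
move=> unstr /and3P [_ _ /forallP least] v; rewrite ffunE.
case: eqP => // _ fv w u; case: (eqVneq w r) => [->|wr].
  by rewrite ffunE eqxx => -[<-] v0; apply: (implyP (least v)); rewrite v0 fv.
by rewrite graft_other //; apply: unstr.
Qed.

Lemma exposed_child0_uniq g r1 r2 : 0 < r1 -> 0 < r2 ->
  exposed_child0 g r1 -> exposed_child0 g r2 -> r1 = r2.
Proof.
move=> r1_gt0 r2_gt0 [g1 unstr1] [g2 unstr2].
by apply/val_inj/eqP; rewrite eqn_leq (unstr2 _ _ g1) ?(unstr1 _ _ g2).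
Qed.

Lemma exists_nonzero_root f : nedges f < n -> exists r, (0 < r) && (f r == None).
Proof.
move=> few; apply/existsP; apply: contraTT few => /existsPn noroot.
have nonzero_edges : [set~ ord0] \subset [set v | f v != None].
  apply/subsetP => v; rewrite !inE -val_eqE -lt0n => v0; move: (noroot v).
  by rewrite v0.
by move: (subset_leq_card nonzero_edges); rewrite cardsC1 card_ord -leqNgt.
Qed.

Lemma exists_least_nonzero_root f : nedges f < n -> exists r, least_nonzero_root f r.
Proof.
move=> /exists_nonzero_root [r0 root0].
pose nonzero_root r := (0 < r) && (f r == None).
have [r /andP [r_gt0 fr] least] := @arg_minnP _ r0 nonzero_root val root0.
by exists r; rewrite /least_nonzero_root r_gt0 fr; apply/forallP => v; apply/implyP/least.
Qed.

Lemma merge_first_treesE f : nedges f < n ->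
  exists2 r, least_nonzero_root f r & merge_first_trees f = graft f r.
Proof.
rewrite /merge_first_trees; case: pickP => [r least _ | none /exists_least_nonzero_root [r]].
  by exists r.
by rewrite none.
Qed.

Lemma graft_inj f1 f2 r1 r2 : least_nonzero_root f1 r1 -> least_nonzero_root f2 r2 ->
  roots_unstraddled f1 -> roots_unstraddled f2 -> graft f1 r1 = graft f2 r2 -> f1 = f2.
Proof.
move=> /and3P [r1_gt0 /eqP fr1 _] /and3P [r2_gt0 /eqP fr2 _] unstr1 unstr2 eqg.
have r12 : r1 = r2.
  apply: exposed_child0_uniq r1_gt0 r2_gt0 (exposed_graft unstr1 fr1) _.
  by rewrite eqg; apply: exposed_graft.
subst r2; apply/ffunP => v; case: (eqVneq v r1) => [->|vr]; first by rewrite fr1 fr2.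
by rewrite -(graft_other f1 vr) eqg graft_other.
Qed.

Definition priority_forests k : {set forest_fn n} :=
  [set f | priority_forest f && (nedges f == k)].

Lemma priority_forestsP k f :
  reflect [/\ increasing_forest f, roots_unstraddled f & nedges f = k] (f \in priority_forests k).
Proof.
rewrite inE /priority_forest.
apply: (iffP idP) => [|[incf unstr ->]].
  by case/andP => /andP [incf /(priority_condP incf) unstr] /eqP.
by rewrite eqxx andbT incf; apply/priority_condP.
Qed.

Section Merge.
Variable k : nat.
Hypothesis k_lt_n : k < n.

Lemma merge_first_trees_graft f : f \in priority_forests k ->
  exists2 r, least_nonzero_root f r & merge_first_trees f = graft f r.
Proof. by case/priority_forestsP => _ _ fk; apply: merge_first_treesE; rewrite fk. Qed.

Lemma merge_first_trees_subset :
  merge_first_trees @: priority_forests k \subset priority_forests k.+1.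
Proof.
apply/subsetP => _ /imsetP [f fk ->]; have [r least ->] := merge_first_trees_graft fk.
have /and3P [r_gt0 /eqP fr _] := least.
case/priority_forestsP: fk => incf unstr fk; apply/priority_forestsP; split.
- exact: graft_increasing.
- exact: graft_roots_unstraddled.
- by rewrite nedges_graft // fk.
Qed.

Lemma merge_first_trees_inj : {in priority_forests k &, injective merge_first_trees}.
Proof.
move=> f1 f2 f1k f2k; have [r1 least1 ->] := merge_first_trees_graft f1k.
have [r2 least2 ->] := merge_first_trees_graft f2k.
case/priority_forestsP: f1k => _ unstr1 _; case/priority_forestsP: f2k => _ unstr2 _.
exact: graft_inj.
Qed.

Lemma merge_first_trees_exposed f : f \in priority_forests k ->
  exists r, exposed_child0 (merge_first_trees f) r.
Proof.
move=> fk; have [r /and3P [_ /eqP fr _] ->] := merge_first_trees_graft fk.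
by case/priority_forestsP: fk => _ unstr _; exists r; apply: exposed_graft.
Qed.

Lemma card_priority_forests_le : #|priority_forests k| <= #|priority_forests k.+1|.
Proof.
rewrite -(card_in_imset merge_first_trees_inj).
exact/subset_leq_card/merge_first_trees_subset.
Qed.

Lemma card_priority_forests_lt g : g \in priority_forests k.+1 ->
  (forall r, ~ exposed_child0 g r) -> #|priority_forests k| < #|priority_forests k.+1|.
Proof.
move=> gk unexposed; rewrite -(card_in_imset merge_first_trees_inj).
apply/proper_card/properP; split; first exact: merge_first_trees_subset.
exists g => //; apply/imsetP => -[f fk gE].
by have [r] := merge_first_trees_exposed fk; rewrite -gE; apply: unexposed.
Qed.

End Merge.

Definition star1 k : forest_fn n :=
  [ffun v : 'I_n.+1 => if 1 < v < k.+3 then Some (inord 1) else None].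

Lemma star1_mem k : k.+2 <= n -> star1 k \in priority_forests k.+1.
Proof.
move=> kn; apply/priority_forestsP; split.
- apply/forallP => v; rewrite ffunE; case: ifP => // /andP [v_gt1 _].
  by rewrite inordK //; have := ltn_ord v; lia.
- move=> v; rewrite ffunE; case: ifP => // v_out _ w u; rewrite ffunE.
  case: ifP => // /andP [_ wk] [<-]; rewrite inordK; last lia.
  by move=> v_gt1; move: v_out; rewrite v_gt1 /= => /negbT; rewrite -ltnNge; lia.
- rewrite /nedges -[k.+1]/(k.+3 - 2) -(@card_interval n.+1); last lia.
  by apply: eq_card => v; rewrite !inE ffunE; case: ifP.
Qed.

Lemma star1_unexposed k r : ~ exposed_child0 (star1 k) r.
Proof.
case; rewrite ffunE; case: ifP => // /andP [r_gt1 _] [/(congr1 val)].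
by rewrite /= inordK //; have := ltn_ord r; lia.
Qed.

Definition broom : forest_fn n :=
  [ffun v : 'I_n.+1 => if 2 < v then Some (inord 1) else if 0 < v then Some ord0 else None].

Lemma broom_mem : broom \in priority_forests n.
Proof.
apply/priority_forestsP; split.
- apply/forallP => v; rewrite ffunE; case: ifP => [v_gt2|_]; last by case: ifP.
  by rewrite inordK //; have := ltn_ord v; lia.
- move=> v; rewrite ffunE; case: ifP => [_ //|_]; case: ifP => [_ //|].
  by rewrite lt0n => /negbFE /eqP v0 _ w u _; rewrite v0.
- have card_nonzero : #|[set~ (ord0 : 'I_n.+1)]| = n by rewrite cardsC1 card_ord.
  rewrite /nedges -[RHS]card_nonzero.
  apply: eq_card => v; rewrite !inE ffunE -val_eqE /= -lt0n.
  by case: ifP => [v_gt2|_]; [rewrite (ltn_trans _ v_gt2) | case: ifP].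
Qed.

Lemma broom_unexposed r : 2 < n -> ~ exposed_child0 broom r.
Proof.
move=> n_gt2 [br unstr].
have /andP [r_gt0 r_le2] : 0 < r <= 2.
  move: br; rewrite ffunE; case: ifP => [_ [/(congr1 val)] | r_le2].
    by rewrite /= inordK //; lia.
  by case: ifP => // r_gt0 _; move/negbT: r_le2; lia.
have := unstr (inord r.+1); rewrite ffunE inordK; last lia.
case: ifP => [r_gt1 /(_ (inord 1) erefl) | _ /(_ ord0 erefl r_gt0)]; last by rewrite ltnn.
by rewrite inordK; lia.
Qed.

Lemma W_card k : k <= n -> W n k = #|priority_forests k|.
Proof. by move=> kn; rewrite /W (_ : k == n.+1 = false) //; apply/negbTE; lia. Qed.

End Forests.

Theorem lemma5p1 (n : nat) :
  (forall k, k < n -> W n k <= W n k.+1) /\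
  (3 <= n -> forall k, k < n -> W n k < W n k.+1).
Proof.
split=> [k kn | n_ge3 k kn]; rewrite !W_card ?(ltnW kn) //.
  exact: card_priority_forests_le.
case: (ltnP k.+1 n) => [k2n | nk].
  by apply: (card_priority_forests_lt kn (star1_mem k2n)) => r; apply: star1_unexposed.
have k1 : k.+1 = n by lia.
apply: (card_priority_forests_lt kn (g := broom n)); first by rewrite k1 broom_mem.
by move=> r; apply: broom_unexposed.
Qed.
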